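(* Let $m$ and $s$ be fixed positive integers and let $G$ be a graph on $n$ vertices. Suppose there is a partition of $V(G)$ into sets $V_1,\dots,V_s$ such that: (i) for each $i<s$ there is no path with $3$ vertices whose two endpoints both lie in $V_i$; (ii) there is no path with $m+1$ vertices whose endpoints lie in $V_i$ and $V_j$ for some $i\neq j$; (iii) $V_s$ is an independent set. Then $|E(G)|=O(n)$ (as $n\to\infty$, with the implied constant depending only on $m$ and $s$).
   Context: Paths are subgraphs; a path with $t$ vertices has $t-1$ edges. *)

From mathcomp Require Import all_boot.
Set Implicit Arguments. Unset Strict Implicit. Unset Printing Implicit Defensive.

Definition simple_graph (T : finType) (e : rel T) : Prop :=
  symmetric e /\ irreflexive e.

Definition edge_set (T : finType) (e : rel T) : {set {set T}} :=
  [set A : {set T} | [exists x : T, exists y : T, e x y && (A == [set x; y])]].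

(* x :: q is a path (as a subgraph: distinct vertices, consecutive adjacent);
   it has size q + 1 vertices, endpoints x and last x q. *)
Definition is_path (T : finType) (e : rel T) (x : T) (q : seq T) : bool :=
  path e x q && uniq (x :: q).

From mathcomp Require Import all_boot.

(* Condition (i) says that every vertex has at most one neighbour in each of
   V_1, ..., V_(s-1), and condition (iii) that every edge has an endpoint in one
   of these classes.  Hence an edge xy with x in V_i (i < s) is determined by the
   pair (y, i), and there are at most (s - 1) n such pairs. *)

Lemma is_path3 {T : finType} {e : rel T} {x y w : T} :
  irreflexive e -> e x y -> e y w -> x != w -> is_path e x [:: y; w].
Proof.
move=> eirr exy eyw nxw.
have nxy : x != y by apply: contraTneq exy => ->; rewrite eirr.
have nyw : y != w by apply: contraTneq eyw => ->; rewrite eirr.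
by rewrite /is_path /= exy eyw /= !inE negb_or nxy nxw nyw.
Qed.

Section EdgesThroughClasses.

Variables (T I : finType) (e : rel T) (f : T -> I) (P : pred I).

Hypothesis e_sym : symmetric e.
Hypothesis nbr_unique :
  forall y x w, e y x -> e y w -> f x = f w -> P (f x) -> x = w.
Hypothesis edge_meets_P : forall x y, e x y -> P (f x) || P (f y).

Definition class_edge (y : T) (i : I) : {set T} :=
  if [pick w | e y w & f w == i] is Some w then [set y; w] else set0.

Lemma class_edgeE x y : e x y -> P (f x) -> class_edge y (f x) = [set x; y].
Proof.
move=> exy Px; rewrite /class_edge.
case: pickP => [w /andP[eyw /eqP fw] | /(_ x)]; last by rewrite e_sym exy eqxx.
by rewrite setUC (nbr_unique _ _ _ eyw _ fw) ?fw // e_sym.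
Qed.

Lemma card_edge_set_le : #|edge_set e| <= #|T| * #|P|.
Proof.
pose codes := setX [set: T] [set i | P i].
have sub : edge_set e \subset [set class_edge p.1 p.2 | p in codes].
  apply/subsetP => A; rewrite inE => /existsP[x /existsP[y /andP[exy /eqP ->]]].
  have /orP[Px | Py] := edge_meets_P _ _ exy.
    by apply/imsetP; exists (y, f x); rewrite ?inE ?Px ?class_edgeE.
  have eyx : e y x by rewrite e_sym.
  by apply/imsetP; exists (x, f y); rewrite ?inE ?Py ?class_edgeE // setUC.
rewrite (leq_trans (subset_leq_card sub)) // (leq_trans (leq_imset_card _ _)) //.
by rewrite cardsX cardsT cardsE.
Qed.

End EdgesThroughClasses.

Arguments card_edge_set_le {T I e f P}.

Theorem lemma3 :
  forall m s : nat, 0 < m -> 0 < s ->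
  exists C : nat,
  forall (T : finType) (e : rel T) (f : T -> 'I_s),
    simple_graph e ->
    (* (i) for each i < s, no 3-vertex path with both endpoints in V_i *)
    (forall (x : T) (q : seq T), is_path e x q -> size q = 2 ->
        (nat_of_ord (f x) < s.-1)%N -> f (last x q) <> f x) ->
    (* (ii) no (m+1)-vertex path with endpoints in different parts *)
    (forall (x : T) (q : seq T), is_path e x q -> size q = m ->
        f (last x q) = f x) ->
    (* (iii) V_s is independent *)
    (forall x y : T, nat_of_ord (f x) = s.-1 -> nat_of_ord (f y) = s.-1 ->
        ~~ e x y) ->
    (#|edge_set e| <= C * #|T|)%N.
Proof.
move=> m s _ s_gt0; exists s => T e f [e_sym e_irr] no_P3 _ last_indep.
pose P := fun i : 'I_s => i < s.-1.
have nbr_unique y x w : e y x -> e y w -> f x = f w -> P (f x) -> x = w.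
  move=> eyx eyw fxw Px; apply/eqP; apply: contraT => nxw.
  have exy : e x y by rewrite e_sym.
  case: (no_P3 x [:: y; w] (is_path3 e_irr exy eyw nxw) erefl Px (esym fxw)).
have edge_meets_P x y : e x y -> P (f x) || P (f y).
  have last_class (z : T) : ~~ P (f z) -> f z = s.-1 :> nat.
    rewrite /P -leqNgt => ge; apply/eqP.
    by rewrite eqn_leq ge andbT -ltnS prednK.
  move=> exy; apply: contraTT exy; rewrite negb_or => /andP[nPx nPy].
  exact: last_indep (last_class _ nPx) (last_class _ nPy).
apply: leq_trans (card_edge_set_le e_sym nbr_unique edge_meets_P) _.
by rewrite mulnC leq_mul // -[X in _ <= X]card_ord max_card.
Qed.
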